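(* If $X$ is an uncountable, zero-dimensional, Borel subspace of a Polish space, then $\mathfrak{s}(X)=\mathfrak{s}(2^\omega)$.
   Context: For infinite sets $U, A$, say $U$ splits $A$ if both $A\cap U$ and $A\setminus U$ are infinite. For a topological space $X$, $\mathfrak{s}(X)$ is the smallest cardinality of a family $\mathcal{U}$ of open subsets of $X$ such that every infinite $A\subseteq X$ is split by some $U\in\mathcal{U}$. $2^\omega$ is the Cantor space. *)

From HB Require Import structures.
From mathcomp Require Import all_boot all_order all_algebra.
From mathcomp Require Import all_classical all_reals all_analysis.
From mathcomp Require Import Rstruct Rstruct_topology.
From Stdlib Require Import Rdefinitions.
Set Implicit Arguments. Unset Strict Implicit. Unset Printing Implicit Defensive.
Import Order.TTheory GRing.Theory Num.Theory.
Local Open Scope classical_set_scope.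
Local Open Scope ring_scope.

Definition polish_space (Y : topologicalType) : Prop :=
  (exists d : Y -> Y -> R,
    [/\ [/\ (forall x y, 0 <= d x y),
           (forall x y, d x y = 0 <-> x = y),
           (forall x y, d x y = d y x) &
           (forall x y z, d x z <= d x y + d y z)],
        (forall O : set Y, open O <->
           (forall x, O x -> exists2 e : R, 0 < e & [set y | d x y < e] `<=` O)) &
        (forall u : nat -> Y,
           (forall e : R, 0 < e -> exists N : nat,
              forall m n : nat, leq N m -> leq N n -> d (u m) (u n) < e) ->
           exists l : Y, u @ \oo --> l)])
  /\ (exists D : set Y, countable D /\ dense D).

Definition borel_set (Y : topologicalType) (A : set Y) : Prop :=
  <<s (@open Y) >> A.

Definition rel_open (Y : topologicalType) (X W : set Y) : Prop :=
  exists2 O : set Y, open O & W = O `&` X.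

Definition rel_clopen (Y : topologicalType) (X W : set Y) : Prop :=
  W `<=` X /\ rel_open X W /\ rel_open X (X `\` W).

Definition zero_dim_subspace (Y : topologicalType) (X : set Y) : Prop :=
  forall (x : Y) (O : set Y), X x -> open O -> O x ->
    exists W : set Y, [/\ rel_clopen X W, W x & W `<=` O].

Definition splits (T : Type) (U A : set T) : Prop :=
  infinite_set (A `&` U) /\ infinite_set (A `\` U).

Definition splitting_family (Y : topologicalType) (X : set Y)
    (U : set (set Y)) : Prop :=
  (forall W, U W -> rel_open X W) /\
  (forall A : set Y, A `<=` X -> infinite_set A -> exists2 W, U W & splits W A).

(* s(X) <= s(Z) (smallest cardinalities compared, cardinals being well-ordered
   in ZFC): every splitting family for Z has cardinality at least that of
   some splitting family for X *)
Definition s_le (Y Y' : topologicalType) (X : set Y) (Z : set Y') : Prop :=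
  forall V : set (set Y'), splitting_family Z V ->
    exists2 U : set (set Y), splitting_family X U & (U #<= V)%card.

Definition s_eq (Y Y' : topologicalType) (X : set Y) (Z : set Y') : Prop :=
  s_le X Z /\ s_le Z X.

(* A Borel subset X of a Polish space becomes clopen for a finer Polish metric: an open
   set O is made clopen by adding |1/dist(x, ~O) - 1/dist(y, ~O)| to the metric, and
   countable unions are handled by first joining the refining metrics d_k into
   sup_k 2^-k min(d_k, 1).  In this complete metric X is closed and uncountable, so a
   Cantor scheme through its condensation points gives a continuous injection of 2^omega
   into X.  Conversely, zero-dimensionality and second countability give countably many
   relatively clopen sets separating the points of X, i.e. a continuous injection of X
   into 2^omega.  A continuous injection f : X -> Z pulls a splitting family of Z back to
   one of X of no larger size, since f^-1(U) splits A whenever U splits f(A). *)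

From mathcomp Require Import all_boot all_order all_algebra.
From mathcomp Require Import all_classical all_reals all_analysis.
From mathcomp Require Import Rstruct zify.
From Stdlib Require Import Reals Lra.

Local Open Scope classical_set_scope.
Local Open Scope R_scope.

Definition Rsup (E : R -> Prop) : R :=
  if pselect (bound E /\ exists x, E x) is left h
  then proj1_sig (completeness E (proj1 h) (proj2 h)) else 0.

Lemma Rsup_ub E M x : (forall y, E y -> y <= M) -> E x -> x <= Rsup E.
Proof.
move=> EM Ex; rewrite /Rsup; case: pselect => [h|[]]; last by split; [exists M|exists x].
by case: completeness => s [+ _] /=; apply.
Qed.

Lemma Rsup_le E M : (exists x, E x) -> (forall y, E y -> y <= M) -> Rsup E <= M.
Proof.
move=> [x Ex] EM; rewrite /Rsup; case: pselect => [h|[]]; last by split; [exists M|exists x].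
by case: completeness => s [_ +] /=; apply.
Qed.

Definition Rinf (E : R -> Prop) : R := - Rsup (fun r => E (- r)).

Lemma Rinf_lb E M x : (forall y, E y -> M <= y) -> E x -> Rinf E <= x.
Proof.
move=> EM Ex; rewrite /Rinf; suff : - x <= Rsup (fun r => E (- r)) by lra.
apply: (Rsup_ub _ (- M)) => [y /EM|]; rewrite ?Ropp_involutive //; lra.
Qed.

Lemma Rinf_ge E M : (exists x, E x) -> (forall y, E y -> M <= y) -> M <= Rinf E.
Proof.
move=> [x Ex] EM; rewrite /Rinf; suff : Rsup (fun r => E (- r)) <= - M by lra.
apply: Rsup_le => [|y /EM]; last lra.
by exists (- x); rewrite Ropp_involutive.
Qed.

Lemma pow_half_gt0 n : 0 < (/2) ^ n.
Proof. by apply: pow_lt; lra. Qed.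

Lemma pow_half_decr {m n} : (m <= n)%nat -> (/2) ^ n <= (/2) ^ m.
Proof.
move=> /subnKC <-; elim: (n - m)%nat => [|k IH]; first by rewrite addn0; lra.
by rewrite addnS /= -/(pow _ _); have := pow_half_gt0 (m + k); lra.
Qed.

Lemma pow_half_le1 n : (/2) ^ n <= 1.
Proof. exact: (pow_half_decr (leq0n n)). Qed.

Lemma pow_half_lt e : 0 < e -> exists n, (/2) ^ n < e.
Proof.
move=> e0; have [|n] := pow_lt_1_zero (/2) _ e e0; first by rewrite Rabs_pos_eq; lra.
move=> /(_ n (le_n n)); rewrite Rabs_pos_eq; last exact/Rlt_le/pow_half_gt0.
by exists n.
Qed.

Lemma Rmin1_subadd {a b c} :
  0 <= b -> 0 <= c -> a <= b + c -> Rmin a 1 <= Rmin b 1 + Rmin c 1.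
Proof. by rewrite /Rmin; repeat case: Rle_dec; lra. Qed.

Lemma Rinv_close a b e :
  0 < a -> 0 < e -> Rabs (a - b) < Rmin (a / 2) (e * a * a / 2) -> Rabs (/ a - / b) < e.
Proof.
move=> a0 e0; have := Rmin_l (a / 2) (e * a * a / 2); have := Rmin_r (a / 2) (e * a * a / 2).
move=> m2 m1 ab; have b0 : a / 2 < b by move: ab; rewrite /Rabs; case: Rcase_abs; lra.
rewrite (_ : / a - / b = (b - a) * / (a * b)); last by field; lra.
rewrite Rabs_mult Rabs_inv Rabs_minus_sym (Rabs_pos_eq (a * b)); last nra.
have ab0 : 0 < a * b by nra.
have gap : 0 < e * a * (b - a / 2) by apply: Rmult_lt_0_compat; nra.
apply: (Rmult_lt_reg_r (a * b)) => //.
by rewrite Rmult_assoc Rinv_l; [lra|apply: Rgt_not_eq].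
Qed.

Lemma witness_seq {I : countType} {A : Type} (a0 : A) (P : I -> A -> Prop) :
  exists p : nat -> A, (forall n, p n = a0 \/ exists i, P i (p n)) /\
    (forall i, (exists a, P i a) -> exists n, P i (p n)).
Proof.
pose c i := if pselect (exists a, P i a) is left h then Some (proj1_sig (cid h)) else None.
exists (fun n => if unpickle n is Some i then odflt a0 (c i) else a0).
split=> [n|i hi].
  case: unpickle => [i|]; last by left.
  rewrite /c; case: pselect => [h|_]; last by left.
  by right; exists i; exact: proj2_sig (cid h).
exists (pickle i); rewrite pickleK /c; case: pselect => // h.
exact: proj2_sig (cid h).
Qed.

Lemma countable_sub_range {T} (y0 : T) {D : set T} :
  countable D -> exists p : nat -> T, D `<=` range p.
Proof.
move=> /countable_injP[f finj].
have [p [_ hp]] := witness_seq y0 (fun n y => D y /\ f y = n).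
exists p => y Dy; have [|k [Dpk fpk]] := hp (f y); first by exists y.
by exists k => //; apply: finj => //; exact/mem_set.
Qed.

Lemma countableU {T} {A B : set T} : countable A -> countable B -> countable (A `|` B).
Proof.
move=> cA cB; have : countable (\bigcup_(b in [set: bool]) if b then A else B).
  by apply: bigcup_countable => [|[]]; first exact: countableP.
by apply/sub_countable/subset_card_le => x [Ax|Bx]; [exists true|exists false].
Qed.

Lemma uncountable_diff {T} {S C : set T} :
  ~ countable S -> countable C -> exists2 x, S x & ~ C x.
Proof.
move=> nS cC; apply: contrapT => h; apply/nS/(sub_countable _ cC)/subset_card_le.
by move=> x Sx; apply: contrapT => Cx; apply: h; exists x.
Qed.

Lemma eventually_forall_lt (P : nat -> nat -> Prop) N :
  (forall k, exists M, forall m, (M <= m)%nat -> P k m) ->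
  exists M, forall k m, (k < N)%nat -> (M <= m)%nat -> P k m.
Proof.
move=> ev; elim: N => [|N [M hM]]; first by exists 0%nat.
have [M' hM'] := ev N; exists (maxn M M') => k m; rewrite ltnS leq_eqVlt.
case/predU1P => [->|kN] mM; [apply: hM'|apply: hM] => //; lia.
Qed.

Record is_metric (T : Type) (d : T -> T -> R) : Prop := {
  metric_ge0 : forall x y, 0 <= d x y;
  metric_eq0 : forall x y, d x y = 0 <-> x = y;
  metricC : forall x y, d x y = d y x;
  metric_triangle : forall x y z, d x z <= d x y + d y z }.

Arguments is_metric {T}.
Arguments metric_ge0 {T d}.
Arguments metric_eq0 {T d}.
Arguments metricC {T d}.
Arguments metric_triangle {T d}.

Section Metric.
Context {T : Type}.
Implicit Types (d : T -> T -> R) (u : nat -> T) (O : set T).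

Definition mcauchy d u := forall e, 0 < e -> exists N,
  forall m n, (N <= m)%nat -> (N <= n)%nat -> d (u m) (u n) < e.
Definition mcvg d u l := forall e, 0 < e -> exists N,
  forall n, (N <= n)%nat -> d (u n) l < e.
Definition mcomplete d := forall u, mcauchy d u -> exists l, mcvg d u l.
Definition mseparable d :=
  exists q : nat -> T, forall x e, 0 < e -> exists i, d x (q i) < e.
Definition polish_metric d := [/\ is_metric d, mcomplete d & mseparable d].

Definition mopen d O :=
  forall x, O x -> exists2 e, 0 < e & forall y, d x y < e -> O y.

Definition finer d' d :=
  forall e, 0 < e -> exists2 r, 0 < r & forall x y, d' x y < r -> d x y < e.

Lemma metric_gt0 {d x y} : is_metric d -> x <> y -> 0 < d x y.
Proof.
move=> dm xy; case: (Rle_lt_or_eq_dec _ _ (metric_ge0 dm x y)) => // /esym.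
by move/(metric_eq0 dm).
Qed.

Lemma metric_xx {d} x : is_metric d -> d x x = 0.
Proof. by move=> dm; apply/(metric_eq0 dm). Qed.

Lemma mopen_ball {d} c r : is_metric d -> mopen d [set y | d c y < r].
Proof.
move=> dm x /= cx; exists (r - d c x) => [|y xy]; first lra.
by have := metric_triangle dm c x y; lra.
Qed.

Lemma finer_trans {d1 d2 d3} : finer d1 d2 -> finer d2 d3 -> finer d1 d3.
Proof.
move=> f12 f23 e /f23[r /f12[s s0 h12] h23].
by exists s => // x y /h12/h23.
Qed.

Lemma finer_mcauchy {d' d u} : finer d' d -> mcauchy d' u -> mcauchy d u.
Proof.
move=> f c e /f[r /c[N h] hr].
by exists N => m n mN nN; apply/hr/h.
Qed.

Lemma finer_mcvg {d' d u l} : finer d' d -> mcvg d' u l -> mcvg d u l.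
Proof.
move=> f c e /f[r /c[N h] hr].
by exists N => n nN; apply/hr/h.
Qed.

Lemma finer_mopen {d' d O} : finer d' d -> mopen d O -> mopen d' O.
Proof.
move=> f o x /o[e /f[r r0 hr] he].
by exists r => // y /hr/he.
Qed.

Lemma mcvg_unique {d u l l'} : is_metric d -> mcvg d u l -> mcvg d u l' -> l = l'.
Proof.
move=> dm cl cl'; apply: contrapT => /(metric_gt0 dm) ll'.
have [N hN] := cl _ (ltac:(lra) : 0 < d l l' / 2).
have [N' hN'] := cl' _ (ltac:(lra) : 0 < d l l' / 2).
have := hN (maxn N N') (leq_maxl _ _); have := hN' (maxn N N') (leq_maxr _ _).
have := metric_triangle dm l (u (maxn N N')) l'; rewrite (metricC dm l (u _)); lra.
Qed.

End Metric.

Lemma mseparable_subset {T : Type} {d : T -> T -> R} (S : set T) :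
  is_metric d -> mseparable d ->
  exists p : nat -> T, forall x e, S x -> 0 < e -> exists i, S (p i) /\ d x (p i) < e.
Proof.
move=> dm [q dq].
have [p [_ hp]] := witness_seq (q 0%nat)
  (fun k : nat * nat => fun y => S y /\ d (q k.1) y < (/2) ^ k.2).
exists p => x e Sx e0.
have [m me] : exists m, (/2) ^ m < e / 2 by apply: pow_half_lt; lra.
have [i xi] := dq x _ (pow_half_gt0 m).
have [|n /= [Spn ipn]] := hp (i, m); first by exists x; rewrite /= metricC.
by exists n; split; last by have := metric_triangle dm x (q i) (p n); lra.
Qed.

Definition clopenable {T} (d : T -> T -> R) (B : set T) :=
  exists d', [/\ polish_metric d', finer d' d, mopen d' B & mopen d' (~` B)].

Section JoinMetric.
Context {T : Type}.
Variables (d0 : T -> T -> R) (dn : nat -> T -> T -> R).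
Hypotheses (d0m : is_metric d0) (dnp : forall n, polish_metric (dn n)).
(* A common coarser metric [d0] makes the limits of a sequence in all the [dn n] agree. *)
Hypothesis dn_finer : forall n, finer (dn n) d0.

Let dnm n : is_metric (dn n). Proof. by case: (dnp n). Qed.

Definition join_metric x y :=
  Rsup (fun r => exists k, r = (/2) ^ k * Rmin (dn k x y) 1).

Lemma join_ge k x y : (/2) ^ k * Rmin (dn k x y) 1 <= join_metric x y.
Proof.
apply: (Rsup_ub _ 1) => [_ [j ->]|]; last by exists k.
have := pow_half_le1 j; have := pow_half_gt0 j; have := Rmin_r (dn j x y) 1; nra.
Qed.

Lemma join_le x y M :
  (forall k, (/2) ^ k * Rmin (dn k x y) 1 <= M) -> join_metric x y <= M.
Proof. by move=> hM; apply: Rsup_le => [|_ [k ->]] //; eexists; exists 0%nat. Qed.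

Lemma join_le_tail x y e N : (/2) ^ N <= e ->
  (forall k, (k < N)%nat -> dn k x y <= e) -> join_metric x y <= e.
Proof.
move=> Ne hN; apply: join_le => k.
have := pow_half_gt0 k; have := pow_half_le1 k; have := Rmin_r (dn k x y) 1.
have : 0 <= Rmin (dn k x y) 1 by apply: Rmin_glb; [exact: metric_ge0|lra].
case: (ltnP k N) => [/hN|/pow_half_decr]; have := Rmin_l (dn k x y) 1; nra.
Qed.

Lemma join_metricP : is_metric join_metric.
Proof.
have J0 x y : Rmin (dn 0 x y) 1 <= join_metric x y.
  by have := join_ge 0 x y; rewrite /= Rmult_1_l.
have Rmin0 x y : 0 <= Rmin (dn 0 x y) 1.
  by apply: Rmin_glb; [exact: metric_ge0|lra].
split.
- by move=> x y; have := J0 x y; have := Rmin0 x y; lra.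
- move=> x y; split => [J|<-].
    apply/(metric_eq0 (dnm 0)); have := J0 x y; have := Rmin0 x y.
    by rewrite J /Rmin; case: Rle_dec; lra.
  apply: Rle_antisym; last by have := J0 x x; have := Rmin0 x x; lra.
  by apply: join_le => k; rewrite metric_xx // Rmin_left; lra.
- move=> x y; apply: Rle_antisym; apply: join_le => k;
  by rewrite (metricC (dnm k)); apply: join_ge.
- move=> x y z; apply: join_le => k.
  have := join_ge k x y; have := join_ge k y z; have := pow_half_gt0 k.
  have := Rmin1_subadd (metric_ge0 (dnm k) x y) (metric_ge0 (dnm k) y z)
    (metric_triangle (dnm k) x y z).
  nra.
Qed.

Lemma join_finer n : finer join_metric (dn n).
Proof.
move=> e e0; exists ((/2) ^ n * Rmin e 1).
  by apply: Rmult_lt_0_compat; [exact: pow_half_gt0|apply: Rmin_glb_lt; lra].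
move=> x y /(Rle_lt_trans _ _ _ (join_ge n x y)) /Rmult_lt_reg_l.
move=> /(_ (pow_half_gt0 n)); rewrite /Rmin; repeat case: Rle_dec; lra.
Qed.

Lemma join_complete : mcomplete join_metric.
Proof.
move=> u Ju.
have [l ul] : exists l, forall n, mcvg (dn n) u l.
  have lim n : exists l, mcvg (dn n) u l.
    by case: (dnp n) => _ + _; apply; exact: finer_mcauchy (join_finer n) Ju.
  have [l ul0] := lim 0%nat; exists l => n; have [l' uln] := lim n.
  suff <- : l' = l by [].
  exact: (mcvg_unique d0m (finer_mcvg (dn_finer n) uln) (finer_mcvg (dn_finer 0) ul0)).
exists l => e e0.
have [N Ne] : exists N, (/2) ^ N < e / 2 by apply: pow_half_lt; lra.
have [M hM] := eventually_forall_lt (fun k m => dn k (u m) l < e / 2) N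
  (fun k => ul k _ (ltac:(lra) : 0 < e / 2)).
exists M => m Mm; apply: (Rle_lt_trans _ (e / 2)); last lra.
by apply: (join_le_tail _ _ _ N) => [|k kN]; [lra|apply/Rlt_le/hM].
Qed.

Lemma join_separable : mseparable join_metric.
Proof.
have [q dq] := @choice _ _ (fun k q => forall x e, 0 < e -> exists i, dn k x (q i) < e)
  (fun k => let: And3 _ _ sep := dnp k in sep).
have [p [_ hp]] := witness_seq (q 0%nat 0%nat) (fun ms : nat * seq nat => fun y =>
  forall k, (k < size ms.2)%nat -> dn k (q k (nth 0%nat ms.2 k)) y < (/2) ^ ms.1).
exists p => x e e0.
have [N Ne] : exists N, (/2) ^ N < e / 2 by apply: pow_half_lt; lra.
have [m me] : exists m, (/2) ^ m < e / 4 by apply: pow_half_lt; lra.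
have [g xg] := @choice _ _ (fun k i => dn k x (q k i) < (/2) ^ m)
  (fun k => dq k x _ (pow_half_gt0 m)).
have [|n /= hn] := hp (m, mkseq g N).
  by exists x => k /=; rewrite size_mkseq => kN; rewrite nth_mkseq // metricC.
exists n; apply: (Rle_lt_trans _ (e / 2)); last lra.
apply: (join_le_tail _ _ _ N) => [|k kN]; first lra.
have := hn k; rewrite size_mkseq nth_mkseq // => /(_ kN).
by have := xg k; have := metric_triangle (dnm k) x (q k (g k)) (p n); lra.
Qed.

Lemma join_polish : polish_metric join_metric.
Proof. by split; [exact: join_metricP|exact: join_complete|exact: join_separable]. Qed.

End JoinMetric.

Section OpenRefinement.
Context {T : Type}.
Variables (d : T -> T -> R) (O : set T).
Hypotheses (dp : polish_metric d) (Oo : mopen d O).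

Let dm : is_metric d. Proof. by case: dp. Qed.

(* The distance to [~` O], truncated at 1 so that it makes sense when [O = setT]. *)
Definition dist_compl x := Rinf (fun r => r = 1 \/ exists2 y, ~ O y & r = d x y).

Lemma dist_compl_le1 x : dist_compl x <= 1.
Proof.
apply: (Rinf_lb _ 0) => [r [->|[y _ ->]]|]; [lra|exact: metric_ge0|by left].
Qed.

Lemma dist_compl_lipschitz x y : dist_compl x <= dist_compl y + d x y.
Proof.
suff : dist_compl x - d x y <= dist_compl y by lra.
apply: Rinf_ge => [|r [->|[z Oz ->]]]; first by exists 1; left.
  by have := dist_compl_le1 x; have := metric_ge0 dm x y; lra.
have : dist_compl x <= d x z by apply: (Rinf_lb _ 0) => [s [->|[w _ ->]]|]; 
  [lra|exact: metric_ge0|right; exists z].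
by have := metric_triangle dm x y z; lra.
Qed.

Lemma dist_compl_gt0 x : O x -> 0 < dist_compl x.
Proof.
move=> /Oo[e e0 ball_e]; apply: (Rlt_le_trans _ (Rmin e 1)); first by apply: Rmin_glb_lt; lra.
apply: Rinf_ge => [|r [->|[y Oy ->]]]; [by exists 1; left|exact: Rmin_r|].
apply: (Rle_trans _ e); first exact: Rmin_l.
by apply: Rnot_lt_le => /ball_e.
Qed.

Lemma gt0_dist_compl x : 0 < dist_compl x -> O x.
Proof.
move=> fx; apply: contrapT => Ox; suff : dist_compl x <= 0 by lra.
rewrite -(metric_xx x dm); apply: (Rinf_lb _ 0) => [r [->|[y _ ->]]|]; 
  [lra|exact: metric_ge0|by right; exists x].
Qed.

Definition inv_dist x := if pselect (O x) is left _ then / dist_compl x else 0.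

Lemma inv_dist_ge1 x : O x -> 1 <= inv_dist x.
Proof.
move=> Ox; rewrite /inv_dist; case: pselect => [?|//]; rewrite -Rinv_1.
by apply: Rinv_le_contravar; [exact: dist_compl_gt0|exact: dist_compl_le1].
Qed.

Lemma inv_dist_out y : ~ O y -> inv_dist y = 0.
Proof. by move=> Oy; rewrite /inv_dist; case: pselect. Qed.

Lemma inv_dist_cont {x e} : O x -> 0 < e -> exists2 r, 0 < r &
  forall y, O y -> d x y < r -> Rabs (inv_dist x - inv_dist y) < e.
Proof.
move=> Ox e0; have a0 := dist_compl_gt0 _ Ox.
exists (Rmin (dist_compl x / 2) (e * dist_compl x * dist_compl x / 2)).
  by apply: Rmin_glb_lt; [lra|have := Rmult_lt_0_compat _ _ e0 a0; nra].
move=> y Oy xy; rewrite /inv_dist; do 2![case: pselect => // ?].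
apply: Rinv_close => //; apply: Rle_lt_trans xy.
have := dist_compl_lipschitz x y; have := dist_compl_lipschitz y x.
by rewrite (metricC dm y x) /Rabs; case: Rcase_abs; lra.
Qed.

Definition refine_metric x y := d x y + Rabs (inv_dist x - inv_dist y).

Lemma refine_metricP : is_metric refine_metric.
Proof.
rewrite /refine_metric; split.
- by move=> x y; have := metric_ge0 dm x y; have := Rabs_pos (inv_dist x - inv_dist y); lra.
- move=> x y; split => [|<-]; last by rewrite metric_xx // Rminus_diag Rabs_R0; lra.
  have := metric_ge0 dm x y; have := Rabs_pos (inv_dist x - inv_dist y).
  by move=> h1 h2 h3; apply/(metric_eq0 dm); lra.
- by move=> x y; rewrite (metricC dm) Rabs_minus_sym.
- move=> x y z; have := metric_triangle dm x y z.
  have := Rabs_triang (inv_dist x - inv_dist y) (inv_dist y - inv_dist z).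
  by rewrite (_ : _ + _ = inv_dist x - inv_dist z); [lra|ring].
Qed.

Lemma refine_finer : finer refine_metric d.
Proof.
move=> e e0; exists e => // x y; rewrite /refine_metric.
by have := Rabs_pos (inv_dist x - inv_dist y); lra.
Qed.

Lemma refine_same_side x y : refine_metric x y < 1 -> O x -> O y.
Proof.
move=> xy Ox; apply: contrapT => Oy; move: xy.
rewrite /refine_metric (inv_dist_out _ Oy) Rminus_0_r; have := inv_dist_ge1 _ Ox.
by have := metric_ge0 dm x y; rewrite /Rabs; case: Rcase_abs; lra.
Qed.

Lemma refine_mopen : mopen refine_metric O.
Proof. by move=> x Ox; exists 1 => [|y /refine_same_side]; [lra|exact]. Qed.

Lemma refine_mopenC : mopen refine_metric (~` O).
Proof.
move=> x Ox; exists 1 => [|y xy Oy]; first lra.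
by apply/Ox/(refine_same_side y x) => //; rewrite (metricC refine_metricP).
Qed.

Lemma refine_mcvg_out u l N : mcvg d u l ->
  (forall n, (N <= n)%nat -> ~ O (u n)) -> mcvg refine_metric u l.
Proof.
move=> ul out.
have Ol : ~ O l.
  move=> /Oo[e e0 ball_e]; have [M hM] := ul e e0.
  apply: (out (maxn N M)); first exact: leq_maxl.
  by apply: ball_e; rewrite (metricC dm); apply: hM; exact: leq_maxr.
move=> e /ul[M hM]; exists (maxn N M) => n nNM.
rewrite /refine_metric !inv_dist_out ?Rminus_diag ?Rabs_R0 ?Rplus_0_r //.
  by apply: hM; lia.
by apply: out; lia.
Qed.

Lemma refine_mcvg_in u l N H : mcvg d u l ->
  (forall n, (N <= n)%nat -> O (u n) /\ inv_dist (u n) <= H) -> mcvg refine_metric u l.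
Proof.
move=> ul inO.
have H0 : 0 < H by have [/inv_dist_ge1 + ?] := inO N (leqnn N); lra.
have lb n : (N <= n)%nat -> / H <= dist_compl (u n).
  move=> /inO[Oun]; rewrite /inv_dist; case: pselect => // ? invH.
  rewrite -[dist_compl _]Rinv_inv; apply: Rinv_le_contravar invH.
  exact/Rinv_0_lt_compat/dist_compl_gt0.
have Ol : O l.
  have [M hM] := ul (/ H / 2) (ltac:(have := Rinv_0_lt_compat _ H0; lra)).
  apply: gt0_dist_compl; have := lb _ (leq_maxl N M); have := hM _ (leq_maxr N M).
  by have := dist_compl_lipschitz (u (maxn N M)) l; have := Rinv_0_lt_compat _ H0; lra.
move=> e e0; have e2 : 0 < e / 2 by lra.
have [r r0 hr] := inv_dist_cont Ol e2.
have [M hM] := ul (Rmin r (e / 2)) (ltac:(by apply: Rmin_glb_lt; lra)).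
exists (maxn N M) => n nNM; have [Oun _] := inO n (leq_trans (leq_maxl _ _) nNM).
have := hM n (leq_trans (leq_maxr _ _) nNM).
have := Rmin_l r (e / 2); have := Rmin_r r (e / 2) => m2 m1 close.
have := hr (u n) Oun (ltac:(rewrite (metricC dm); lra)).
by rewrite /refine_metric Rabs_minus_sym; lra.
Qed.

Lemma refine_complete : mcomplete refine_metric.
Proof.
move=> u Cu; case: dp => _ dc _.
have [l ul] := dc u (finer_mcauchy refine_finer Cu).
have [N hN] := Cu 1 Rlt_0_1; exists l.
case: (pselect (O (u N))) => [OuN|OuN].
  apply: (refine_mcvg_in _ _ N (inv_dist (u N) + 1) ul) => n Nn.
  have := hN n N Nn (leqnn N); rewrite (metricC refine_metricP) => close.
  split; first exact: refine_same_side close OuN.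
  move: close; rewrite (metricC refine_metricP) /refine_metric.
  by have := metric_ge0 dm (u n) (u N); rewrite /Rabs; case: Rcase_abs; lra.
apply: (refine_mcvg_out _ _ N ul) => n Nn Oun; apply: OuN.
exact: refine_same_side (hN n N Nn (leqnn N)) Oun.
Qed.

Lemma refine_separable : mseparable refine_metric.
Proof.
case: dp => _ _ dsep.
have [pin hin] := mseparable_subset O dm dsep.
have [pout hout] := mseparable_subset (~` O) dm dsep.
exists (fun n => if odd n then pin n./2 else pout n./2) => x e e0.
case: (pselect (O x)) => Ox.
  have [r r0 hr] := inv_dist_cont Ox (ltac:(lra) : 0 < e / 2).
  have [i [Oi xi]] := hin x (Rmin r (e / 2)) Ox (ltac:(by apply: Rmin_glb_lt; lra)).
  exists i.*2.+1; rewrite /= odd_double uphalf_double /=.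
  have := Rmin_l r (e / 2); have := Rmin_r r (e / 2) => m2 m1.
  by have := hr _ Oi (ltac:(lra)); rewrite /refine_metric; lra.
have [i [Oi xi]] := hout x e Ox e0.
exists i.*2; rewrite odd_double doubleK /refine_metric.
by rewrite !inv_dist_out // Rminus_diag Rabs_R0; lra.
Qed.

Lemma refine_polish : polish_metric refine_metric.
Proof.
by split; [exact: refine_metricP|exact: refine_complete|exact: refine_separable].
Qed.

End OpenRefinement.

Lemma clopenable_open {T} {d : T -> T -> R} {O} :
  polish_metric d -> mopen d O -> clopenable d O.
Proof.
move=> dp Oo; exists (refine_metric d O).
by split; [exact: refine_polish|exact: refine_finer|exact: refine_mopen|exact: refine_mopenC].
Qed.

Lemma clopenableC {T} {d : T -> T -> R} {B} : clopenable d B -> clopenable d (~` B).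
Proof. by case=> d' [? ? ? ?]; exists d'; split; rewrite ?setCK. Qed.

(* The join makes every [B n], hence their union, open; refining once more makes it clopen. *)
Lemma clopenable_bigcup T (d : T -> T -> R) (B : nat -> set T) :
  polish_metric d -> (forall n, clopenable d (B n)) -> clopenable d (\bigcup_n B n).
Proof.
move=> dp cB; have [dn dnP] := @choice _ _ (fun n d' =>
  [/\ polish_metric d', finer d' d, mopen d' (B n) & mopen d' (~` B n)]) cB.
have dm : is_metric d by case: dp.
have Jp := join_polish _ _ dm (fun n => let: And4 p _ _ _ := dnP n in p)
  (fun n => let: And4 _ f _ _ := dnP n in f).
have JB : mopen (join_metric dn) (\bigcup_n B n).
  move=> x [n _ Bnx]; have [_ _ Bo _] := dnP n.
  have [e e0 hx] := finer_mopen (join_finer dn n) Bo x Bnx.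
  by exists e => // y /hx Bny; exists n.
have [d' [d'p d'J d'o d'oC]] := clopenable_open Jp JB.
exists d'; split => //; apply: (finer_trans d'J); apply: finer_trans (join_finer dn 0) _.
by case: (dnP 0%nat).
Qed.

Section CondensationPoints.
Context {T : Type}.
Variables (d : T -> T -> R) (B : set T).
Hypotheses (dm : is_metric d) (dsep : mseparable d).

Definition condensation x := forall e, 0 < e -> ~ countable [set y | B y /\ d x y < e].

(* A non-condensation point lies in a basic ball meeting [B] countably. *)
Lemma countable_not_condensation : countable [set x | B x /\ ~ condensation x].
Proof.
case: dsep => q dq.
pose ball k := [set y | B y /\ d (q k.1) y < (/2) ^ k.2].
have : countable (\bigcup_(k in [set k | countable (ball k)]) ball k).
  by apply: bigcup_countable => //; exact: countableP.
apply/sub_countable/subset_card_le => x [Bx /existsNP[e /not_implyP[e0 /contrapT ce]]].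
have [m me] : exists m, (/2) ^ m < e / 2 by apply: pow_half_lt; lra.
have [i xi] := dq x _ (pow_half_gt0 m).
exists (i, m); last by split => //=; rewrite (metricC dm).
apply/(sub_countable _ ce)/subset_card_le => y [By qy]; split => //=.
by have := metric_triangle dm x (q i) y; move: qy => /=; lra.
Qed.

Lemma condensation_next c r : B c /\ condensation c -> 0 < r ->
  exists a, (B a /\ condensation a) /\ 0 < d c a < r.
Proof.
move=> [Bc cc] r0.
have [a [Ba ca] /not_orP[/not_andP[//|/contrapT ac] ac']] :=
  uncountable_diff (cc r r0) (countableU countable_not_condensation (countable1 c)).
by exists a; split=> //; split=> //; apply: (metric_gt0 dm) => ca'; apply: ac'; rewrite ca'.
Qed.

Lemma exists_condensation : ~ countable B -> exists c, B c /\ condensation c.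
Proof.
move=> nB.
have [c Bc /not_andP[//|/contrapT cc]] := uncountable_diff nB countable_not_condensation.
by exists c.
Qed.

End CondensationPoints.

Arguments exists_condensation {T d B}.
Arguments condensation_next {T d B}.

Section CantorScheme.
Context {T : Type}.
Variables (d : T -> T -> R) (P : set T) (c0 : T) (next : T -> R -> T).
Hypotheses (dm : is_metric d) (dc : mcomplete d) (Pc0 : P c0).
Hypothesis nextP : forall {c r}, P c -> 0 < r -> P (next c r) /\ 0 < d c (next c r) < r.

(* Radii at most [d c a / 3] keep the limits of the two subtrees of a node apart. *)
Fixpoint scheme (b : nat -> bool) n : T * R :=
  if n is k.+1 then
    let s := scheme b k in
    let a := next s.1 (s.2 / 2) in
    (if b k then a else s.1, Rmin (s.2 / 4) (d s.1 a / 3))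
  else (c0, 1).

Lemma scheme_inv b n : P (scheme b n).1 /\ 0 < (scheme b n).2.
Proof.
elim: n => [|n [Pc r0]] /=; first by split=> //; lra.
have [Pa [a0 _]] := nextP Pc (ltac:(lra) : 0 < (scheme b n).2 / 2).
by split; [case: (b n)|apply: Rmin_glb_lt; lra].
Qed.

Lemma scheme_step b n :
  d (scheme b n).1 (scheme b n.+1).1 + 2 * (scheme b n.+1).2 <= (scheme b n).2.
Proof.
move: (scheme_inv b n); rewrite /=; set c := (scheme b n).1; set r := (scheme b n).2.
move=> [Pc r0]; have [_ [_ ar]] := nextP Pc (ltac:(lra) : 0 < r / 2).
have := Rmin_l (r / 4) (d c (next c (r / 2)) / 3).
by case: (b n); rewrite ?metric_xx //; lra.
Qed.

Lemma scheme_radius b n : (scheme b n).2 <= (/2) ^ n.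
Proof.
elim: n => [|n IH]; first by rewrite /=; lra.
have := scheme_step b n; have := metric_ge0 dm (scheme b n).1 (scheme b n.+1).1.
by rewrite -[(/2) ^ n.+1]/(/2 * (/2) ^ n); lra.
Qed.

Lemma scheme_nested b {n m} : (n <= m)%nat ->
  d (scheme b n).1 (scheme b m).1 + (scheme b m).2 <= (scheme b n).2.
Proof.
move=> /subnKC <-; elim: (m - n)%nat => [|k IH]; first by rewrite addn0 metric_xx //; lra.
have := scheme_step b (n + k); have := metric_triangle dm (scheme b n).1
  (scheme b (n + k)).1 (scheme b (n + k).+1).1.
by have [_ r0] := scheme_inv b (n + k).+1; rewrite addnS; lra.
Qed.

Lemma scheme_cauchy b : mcauchy d (fun n => (scheme b n).1).
Proof.
have close n m : (n <= m)%nat -> d (scheme b n).1 (scheme b m).1 <= (/2) ^ n.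
  move=> nm; have := scheme_nested b nm; have := scheme_radius b n.
  by have [_ r0] := scheme_inv b m; lra.
move=> e /pow_half_lt[N Ne]; exists N => m n Nm Nn.
have [mn|/ltnW nm] := leqP m n.
  by have := pow_half_decr Nm; have := close _ _ mn; lra.
by rewrite metricC //; have := pow_half_decr Nn; have := close _ _ nm; lra.
Qed.

Definition scheme_limit b : T := proj1_sig (cid (dc _ (scheme_cauchy b))).

Lemma scheme_limit_close b n : d (scheme b n).1 (scheme_limit b) <= (scheme b n).2.
Proof.
rewrite /scheme_limit; case: cid => l /= ul; apply: Rnot_lt_le => far.
have [M hM] := ul _ (ltac:(lra) : 0 < d (scheme b n).1 l - (scheme b n).2).
have := hM (maxn n M) (leq_maxr _ _); have := scheme_nested b (leq_maxl n M).
have := metric_triangle dm (scheme b n).1 (scheme b (maxn n M)).1 l.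
by have [_ r0] := scheme_inv b (maxn n M); lra.
Qed.

Lemma scheme_limit_adherent b e : 0 < e -> exists2 y, P y & d (scheme_limit b) y < e.
Proof.
move=> /pow_half_lt[n ne]; exists (scheme b n).1; first by case: (scheme_inv b n).
by rewrite metricC //; have := scheme_limit_close b n; have := scheme_radius b n; lra.
Qed.

Lemma scheme_prefix {b b' n} : (forall i, (i < n)%nat -> b i = b' i) -> scheme b n = scheme b' n.
Proof.
elim: n => [//|n IH] bb' /=.
by rewrite IH ?bb' // => i ilt; apply: bb'; exact: ltnW.
Qed.

Lemma scheme_limit_lipschitz b b' n : (forall i, (i < n)%nat -> b i = b' i) ->
  d (scheme_limit b) (scheme_limit b') <= 2 * (/2) ^ n.
Proof.
move=> /scheme_prefix bb'; have := scheme_limit_close b n; have := scheme_limit_close b' n.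
rewrite -bb' => h' h; have := scheme_radius b n.
have := metric_triangle dm (scheme_limit b) (scheme b n).1 (scheme_limit b').
by rewrite (metricC dm (scheme_limit b) (scheme b n).1); lra.
Qed.

Lemma scheme_children {b b' n} : scheme b n = scheme b' n -> b n <> b' n ->
  (scheme b n.+1).2 = (scheme b' n.+1).2 /\
  3 * (scheme b n.+1).2 <= d (scheme b n.+1).1 (scheme b' n.+1).1.
Proof.
move=> /= <- bb'; split => //.
set c := (scheme b n).1; set r := (scheme b n).2.
have := Rmin_r (r / 4) (d c (next c (r / 2)) / 3).
by case: (b n) (b' n) bb' => -[] // _; rewrite ?(metricC dm (next _ _)); lra.
Qed.

Lemma scheme_limit_inj : injective scheme_limit.
Proof.
move=> b b' eq_lim; apply: contrapT => neq.
have [k /eqP bk] : exists k, b k <> b' k.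
  by apply: contrapT => h; apply/neq/funext => k; apply: contrapT => bk; apply: h; exists k.
have [n /eqP bn min_n] := ex_minnP (ex_intro (fun k => b k != b' k) k bk).
have pre i : (i < n)%nat -> b i = b' i by apply: contraTeq => /min_n; rewrite -leqNgt.
have [rr far] := scheme_children (scheme_prefix pre) bn.
have := scheme_limit_close b n.+1; have := scheme_limit_close b' n.+1; rewrite -rr eq_lim.
have [_ r0] := scheme_inv b n.+1.
have := metric_triangle dm (scheme b n.+1).1 (scheme_limit b') (scheme b' n.+1).1.
by rewrite (metricC dm (scheme_limit b')); lra.
Qed.

End CantorScheme.

Theorem perfect_set_injection {T} {d : T -> T -> R} {B : set T} :
  polish_metric d -> mopen d (~` B) -> ~ countable B ->
  exists e : (nat -> bool) -> T, [/\ injective e, forall b, B (e b) &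
    forall b b' n, (forall i, (i < n)%nat -> b i = b' i) -> d (e b) (e b') <= 2 * (/2) ^ n].
Proof.
case=> dm dc dsep Bclosed nB.
pose P := [set x | B x /\ condensation d B x].
have [c0 Pc0] := exists_condensation dm dsep nB.
have : forall cr : T * R, exists a, P cr.1 -> 0 < cr.2 -> P a /\ 0 < d cr.1 a < cr.2.
  move=> [c r]; case: (pselect (P c /\ 0 < r)) => [[Pc r0]|h].
    by have [a ha] := condensation_next dm dsep _ _ Pc r0; exists a.
  by exists c => Pc r0; exfalso; apply: h.
move=> /(@choice _ _ (fun cr a => P cr.1 -> 0 < cr.2 -> P a /\ 0 < d cr.1 a < cr.2)).
case=> next nextP.
have nextP' c r := nextP (c, r).
exists (scheme_limit d P c0 (fun c r => next (c, r)) dm dc Pc0 nextP'); split.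
- exact: scheme_limit_inj.
- move=> b; apply: contrapT => /Bclosed[r r0 ball].
  by have [y [By _] /ball] := scheme_limit_adherent _ _ _ _ dm dc Pc0 nextP' b _ r0.
- exact: scheme_limit_lipschitz.
Qed.

Lemma polish_space_metric {Y : topologicalType} (y0 : Y) : polish_space Y ->
  exists d : Y -> Y -> R, polish_metric d /\ forall O : set Y, open O <-> mopen d O.
Proof.
case=> -[d [[d0 d_eq0 dC dtri] dtop dcomplete]] [D [cD dD]].
have dm : is_metric d by split=> // [x y|x y z]; apply/RleP.
have dopen O : open O <-> mopen d O.
  rewrite dtop; split=> dO x /dO[e e0 he].
    by exists e => [|y xy]; [exact/RltP|apply: he; exact/RltP].
  by exists e => [|y /RltP]; [exact/RltP|exact: he].
have ball_nbhs x e : 0 < e -> nbhs x [set y | d x y < e].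
  move=> e0; apply: open_nbhs_nbhs; split; first exact/dopen/mopen_ball.
  by rewrite /= metric_xx.
exists d; split=> //; split=> //.
  move=> u uC; case: (dcomplete u) => [e /RltP e0|l ul].
    by have [N hN] := uC e e0; exists N => m n Nm Nn; apply/RltP/hN.
  exists l => e /ball_nbhs/ul[N _ hN].
  by exists N => n Nn; rewrite metricC //; exact: hN.
have [p Dp] := countable_sub_range y0 cD.
exists p => x e e0; have xe : d x x < e by rewrite metric_xx.
have [z [xz /Dp[k _ pkz]]] :=
  dD [set y | d x y < e] (ex_intro _ x xe) (proj2 (dopen _) (mopen_ball x e dm)).
by exists k; rewrite pkz.
Qed.

Lemma borel_clopenable {Y : topologicalType} {d : Y -> Y -> R} {X : set Y} :
  polish_metric d -> (forall O : set Y, open O <-> mopen d O) ->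
  borel_set X -> clopenable d X.
Proof.
move=> dp dtop; apply; split; last by move=> O /dtop; exact: clopenable_open.
split.
- by apply: clopenable_open => // x [].
- by move=> A /clopenableC; rewrite setTD.
- by move=> A; exact: clopenable_bigcup.
Qed.

Lemma clopenable_cantor_injection {T} {d : T -> T -> R} {B : set T} :
  clopenable d B -> ~ countable B ->
  exists e : (nat -> bool) -> T, [/\ injective e, forall b, B (e b) &
    forall b r, 0 < r -> exists n, forall b',
      (forall i, (i < n)%nat -> b' i = b i) -> d (e b) (e b') < r].
Proof.
move=> [d' [d'p d'd _ Bclosed]] nB.
have [e [einj eB elip]] := perfect_set_injection d'p Bclosed nB.
exists e; split=> // b r /d'd[s s0 hs].
have [n ns] : exists n, (/2) ^ n < s / 2 by apply: pow_half_lt; lra.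
exists n => b' bb'; apply: hs; have := elip b b' n (fun i ilt => esym (bb' i ilt)); lra.
Qed.

Lemma cantor_cylinder_nbhs (b : cantor_space) n :
  nbhs b [set c : cantor_space | forall i, (i < n)%nat -> c i = b i].
Proof.
have coord (i : 'I_n) : nbhs b (proj (i : nat) @^-1` [set b i] : set cantor_space).
  apply: open_nbhs_nbhs; split=> //.
  by apply: open_comp; [move=> + _; exact: proj_continuous|exact: discrete_open].
apply: filterS (filter_forall _ coord) => c cb i ilt.
exact: (cb (Ordinal ilt)).
Qed.

Lemma cantor_mcontinuous {Y : topologicalType} (d : Y -> Y -> R) (e : cantor_space -> Y) :
  (forall O : set Y, open O -> mopen d O) ->
  (forall b r, 0 < r -> exists n, forall b' : cantor_space,
    (forall i, (i < n)%nat -> b' i = b i) -> d (e b) (e b') < r) ->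
  continuous e.
Proof.
move=> dtop econt b A; rewrite /= nbhsE; case=> U [oU Ueb] UA.
have [r r0 hr] := dtop U oU _ Ueb; have [n hn] := econt b r r0.
by apply: filterS (cantor_cylinder_nbhs b n) => c /hn/hr/UA.
Qed.

Lemma zero_dim_separating_clopens {Y : topologicalType} {X : set Y} {d : Y -> Y -> R} :
  is_metric d -> mseparable d -> (forall O : set Y, open O <-> mopen d O) ->
  zero_dim_subspace X ->
  exists C : nat -> set Y, (forall k, rel_clopen X (C k)) /\
    forall x y, X x -> X y -> x <> y -> exists k, C k x /\ ~ C k y.
Proof.
move=> dm [q dq] dtop Xzd.
pose ball (k : nat * nat) := [set y | d (q k.1) y < (/2) ^ k.2].
pose good (k : (nat * nat) * (nat * nat)) W :=
  [/\ rel_clopen X W, W `<=` ball k.1 & ball k.2 `&` X `<=` W].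
have [C [Cgood Cex]] := witness_seq set0 good.
exists C; split.
  move=> n; case: (Cgood n) => [->|[k [clo _ _]]] //.
  split=> //; split; first by exists set0; rewrite ?set0I //; exact: open0.
  by exists setT; rewrite ?setD0 ?setTI //; exact: openT.
move=> x y Xx Xy /(metric_gt0 dm) xy.
have ball_x k : d x (q k.1) < (/2) ^ k.2 -> ball k x by rewrite /ball /= metricC.
have [m mxy] : exists m, (/2) ^ m < d x y / 2 by apply: pow_half_lt; lra.
have [i xi] := dq x _ (pow_half_gt0 m).
have [W [Wclo Wx Wball]] :=
  Xzd x (ball (i, m)) Xx (proj2 (dtop _) (mopen_ball _ _ dm)) (ball_x (i, m) xi).
have [_ [[U oU WU] _]] := Wclo.
have Ux : U x by move: Wx; rewrite WU => -[].
have [r r0 Ur] := proj1 (dtop U) oU x Ux.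
have [l lr] : exists l, (/2) ^ l < r / 2 by apply: pow_half_lt; lra.
have [j xj] := dq x _ (pow_half_gt0 l).
have [|n [_ Cn_ball ball_Cn]] := Cex ((i, m), (j, l)).
  exists W; split => // z [jz Xz]; rewrite WU; split => //; apply: Ur.
  by move: jz; rewrite /ball /=; have := metric_triangle dm x (q j) z; lra.
exists n; split; first by apply: ball_Cn; split => //; exact: ball_x.
by move=> /Cn_ball; rewrite /ball /=; have := metric_triangle dm x (q i) y; lra.
Qed.

Definition clopen_code {Y : Type} (C : nat -> set Y) (y : Y) : cantor_space :=
  fun k => `[< C k y >].

Lemma clopen_code_inj (Y : Type) (X : set Y) (C : nat -> set Y) :
  (forall x y, X x -> X y -> x <> y -> exists k, C k x /\ ~ C k y) ->
  {in X &, injective (clopen_code C)}.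
Proof.
move=> Csep x y /set_mem Xx /set_mem Xy cxy; apply: contrapT => /(Csep x y Xx Xy)[k [Ckx Cky]].
by have := congr1 (fun c : cantor_space => c k) cxy; rewrite /clopen_code asboolT // asboolF.
Qed.

Lemma rel_clopen_cvg (Y : topologicalType) (X C : set Y) x : rel_clopen X C -> X x ->
  (fun y => `[< C y >]) @ within X (nbhs x) --> `[< C x >].
Proof.
move=> [_ [[V1 oV1 CV1] [V2 oV2 CV2]]] Xx; apply/discrete_cvg.
case: (pselect (C x)) => Cx.
  have V1x : V1 x by move: Cx; rewrite CV1 => -[].
  apply: filterS (open_nbhs_nbhs (conj oV1 V1x)) => y V1y Xy /=.
  by rewrite !asboolT // CV1.
have [V2x _] : (V2 `&` X) x by rewrite -CV2.
apply: filterS (open_nbhs_nbhs (conj oV2 V2x)) => y V2y Xy /=.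
have [_ nCy] : (X `\` C) y by rewrite CV2.
by rewrite !asboolF.
Qed.

Lemma clopen_code_continuous (Y : topologicalType) (X : set Y) (C : nat -> set Y) :
  (forall k, rel_clopen X (C k)) -> {within X, continuous (clopen_code C)}.
Proof.
move=> Cclo; apply/subspace_continuousP => x Xx.
by apply/pointwise_cvgP => k; exact: rel_clopen_cvg.
Qed.

Lemma s_le_of_injection (Y Y' : topologicalType) (X : set Y) (Z : set Y') (f : Y -> Y') :
  {within X, continuous f} -> {in X &, injective f} -> f @` X `<=` Z -> s_le X Z.
Proof.
move=> fc finj fXZ V [Vopen Vsplit].
exists ((fun W => f @^-1` W `&` X) @` V); last exact: card_image_le.
split.
  move=> _ [W VW <-]; have [U oU ->] := Vopen W VW.
  have /open_subspaceP[U' oU' U'X] := (continuousP _).1 fc U oU.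
  exists U' => //; rewrite U'X; apply/seteqP; split=> y [fy Xy]; split=> //.
    by case: fy.
  by split=> //; apply: fXZ; exists y.
move=> A AX iA.
have finjA : {in A &, injective f}.
  by move=> a b /set_mem/AX/mem_set aX /set_mem/AX/mem_set bX; exact: finj.
have ifA : infinite_set (f @` A) by rewrite (eq_finite_set (inj_card_eq finjA)).
have fAZ : f @` A `<=` Z by move=> _ [a Aa <-]; apply: fXZ; exists a => //; exact: AX.
have [W VW [s1 s2]] := Vsplit (f @` A) fAZ ifA.
exists (f @^-1` W `&` X); first by exists W.
split=> fin.
  apply: s1; apply: sub_finite_set (finite_image f fin) => _ [[a Aa <-] Wfa].
  by exists a => //; split => //; split => //; exact: AX.
apply: s2; apply: sub_finite_set (finite_image f fin) => _ [[a Aa <-] Wfa].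
by exists a => //; split => // -[].
Qed.

Theorem lemma2p3 (Y : topologicalType) (X : set Y) :
  polish_space Y -> borel_set X -> ~ countable X -> zero_dim_subspace X ->
  s_eq X [set: cantor_space].
Proof.
move=> Ypolish XB Xunc Xzd.
have [y0 _ _] := uncountable_diff Xunc (countable0 Y).
have [d [dp dtop]] := polish_space_metric y0 Ypolish; have [dm _ dsep] := dp.
have [e [einj eX econt]] := clopenable_cantor_injection (borel_clopenable dp dtop XB) Xunc.
have [C [Cclopen Csep]] := zero_dim_separating_clopens dm dsep dtop Xzd.
split.
- apply: (@s_le_of_injection _ _ _ _ (clopen_code C)) => //.
  + exact: clopen_code_continuous.
  + exact: clopen_code_inj.
- apply: (@s_le_of_injection cantor_space _ _ _ e).
  + by apply/continuous_subspaceT/(cantor_mcontinuous d _ _ econt) => U /dtop.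
  + by move=> b b' _ _; exact: einj.
  + by move=> _ [b _ <-]; exact: eX.
Qed.
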